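(* Let $X$ be a locale. A posheaf $F$ on $X$ is complete if and only if every $F(u)$ ($u\in\mathcal{O}(X)$) is a complete lattice and every restriction map $F(u)\to F(v)$ ($v\le u$) is surjective and preserves arbitrary joins and arbitrary meets; equivalently, $F$ is a sheaf with values in the category $SCL$ of complete lattices and surjective maps preserving arbitrary sups and arbitrary infs, satisfying condition (POS3).
   Context: Let $X$ be a locale with frame of opens $\mathcal{O}(X)$. A posheaf on $X$ is a sheaf of sets $F$ with (POS1) each $F(u)$ a poset; (POS2) restriction maps $F(u)\to F(v)$, $x\mapsto x|_v$ ($v\le u$), order-preserving; (POS3) if $u=\bigvee_i u_i$ and $s,t\in F(u)$ satisfy $s|_{u_i}\le t|_{u_i}$ for all $i$, then $s\le t$. A point of $F$ is a morphism $p:\hat1\to F$ with $\hat1$ a subsheaf of the terminal sheaf, identified with an element of $F(\mathrm{dom}(p))$ where $\mathrm{dom}(p)$ is the largest open $u$ with $\hat1(u)\ne\emptyset$; points are ordered by $p_1\le p_2$ iff $\mathrm{dom}(p_1)\le\mathrm{dom}(p_2)$ and $p_1\le p_2|_{\mathrm{dom}(p_1)}$. For $u\in\mathcal{O}(X)$, $F^u$ is the restriction of $F$ to $\downarrow u$. A downsheaf is a subsheaf $G$ with each $G(v)$ a down-set of $F(v)$; $\mathbb{D}F(u)$ is the set of downsheaves of $F^u$, ordered by inclusion, with restriction to smaller opens; $\downarrow:F\to\mathbb{D}F$ sends $z\in F(u)$ to the downsheaf $v\mapsto\{y\in F(v)\mid y\le z|_v\}$ ($v\le u$). For order-preserving $\alpha,\beta$,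 $\alpha\dashv\beta$ means $\alpha x\le y\iff x\le\beta y$ for all points. $F$ is complete if $\downarrow:F\to\mathbb{D}F$ has a left adjoint. *)

Set Implicit Arguments.
Unset Strict Implicit.

(* Frames.  A locale X is given by its frame of opens O(X).            *)
Record Frame := {
  opens :> Type;
  fle : opens -> opens -> Prop;
  fle_refl : forall a, fle a a;
  fle_trans : forall a b c, fle a b -> fle b c -> fle a c;
  fle_antisym : forall a b, fle a b -> fle b a -> a = b;
  fmeet : opens -> opens -> opens;
  fmeet_l : forall a b, fle (fmeet a b) a;
  fmeet_r : forall a b, fle (fmeet a b) b;
  fmeet_glb : forall a b c, fle c a -> fle c b -> fle c (fmeet a b);
  fsup : (opens -> Prop) -> opens;
  fsup_ub : forall (S : opens -> Prop) a, S a -> fle a (fsup S);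
  fsup_least : forall (S : opens -> Prop) b, (forall a, S a -> fle a b) -> fle (fsup S) b;
  fdistr : forall a (S : opens -> Prop),
    fmeet a (fsup S) = fsup (fun x => exists s, S s /\ x = fmeet a s)
}.
Arguments fle {_} _ _.
Arguments fmeet {_} _ _.
Arguments fsup {_} _.
Arguments fmeet_l {_} _ _.
Arguments fmeet_r {_} _ _.

Definition Locale := Frame.

Definition covers (X : Locale) (u : X) (I : Type) (ui : I -> X) : Prop :=
  u = fsup (fun x => exists i, x = ui i).

Record Presheaf (X : Locale) := {
  sec : X -> Type;
  res : forall u v : X, fle v u -> sec u -> sec v;
  res_pi : forall u v (h1 h2 : fle v u) x, res h1 x = res h2 x;
  res_id : forall u (h : fle u u) x, res h x = x;
  res_comp : forall u v w (h1 : fle v u) (h2 : fle w v) (h3 : fle w u) x,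
      res h2 (res h1 x) = res h3 x
}.
Arguments sec {X} _ u.
Arguments res {X} _ {u v} _ _.

Definition compatible (X : Locale) (F : Presheaf X) (I : Type) (ui : I -> X)
  (s : forall i, sec F (ui i)) : Prop :=
  forall i j, res F (fmeet_l (ui i) (ui j)) (s i) = res F (fmeet_r (ui i) (ui j)) (s j).

Definition is_sheaf (X : Locale) (F : Presheaf X) : Prop :=
  forall (u : X) (I : Type) (ui : I -> X) (hle : forall i, fle (ui i) u),
    covers u ui ->
    forall s : forall i, sec F (ui i), compatible s ->
    exists t : sec F u, (forall i, res F (hle i) t = s i) /\
      (forall t', (forall i, res F (hle i) t' = s i) -> t' = t).

Record Posheaf (X : Locale) := {
  psh :> Presheaf X;
  psh_sheaf : is_sheaf psh;
  ple : forall u : X, sec psh u -> sec psh u -> Prop;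
  ple_refl : forall u (x : sec psh u), ple x x;
  ple_trans : forall u (x y z : sec psh u), ple x y -> ple y z -> ple x z;
  ple_antisym : forall u (x y : sec psh u), ple x y -> ple y x -> x = y;
  res_mono : forall u v (h : fle v u) (x y : sec psh u),
      ple x y -> ple (res psh h x) (res psh h y);
  pos3 : forall (u : X) (I : Type) (ui : I -> X) (hle : forall i, fle (ui i) u),
    covers u ui -> forall s t : sec psh u,
    (forall i, ple (res psh (hle i) s) (res psh (hle i) t)) -> ple s t
}.
Arguments ple {X} _ {u} _ _.

Section PosheafNotions.
Variable X : Locale.
Variable F : Posheaf X.

(* Points of F: a point p : 1^ -> F (1^ a subterminal sheaf, i.e. 1^ = the
   representable of dom(p)) is identified with an element of F(dom p). *)
Definition ptleF (d1 : X) (x1 : sec F d1) (d2 : X) (x2 : sec F d2) : Prop :=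
  exists h : fle d1 d2, ple F x1 (res F h x2).

(* Downsheaves of F^u, represented by predicates G v on F(v); only the
   values at v <= u matter. *)
Definition is_downsheaf (u : X) (G : forall v : X, sec F v -> Prop) : Prop :=
  (forall v, fle v u -> forall x y : sec F v, G v y -> ple F x y -> G v x) /\
  (forall v w (hv : fle v u) (h : fle w v) (x : sec F v), G v x -> G w (res F h x)) /\
  (forall v (I : Type) (vi : I -> X) (hle : forall i, fle (vi i) v),
      fle v u -> covers v vi ->
      forall s : forall i, sec F (vi i), compatible s -> (forall i, G (vi i) (s i)) ->
      exists t : sec F v, G v t /\ forall i, res F (hle i) t = s i).

Definition ptleD (d1 : X) (G1 : forall v : X, sec F v -> Prop)
                 (d2 : X) (G2 : forall v : X, sec F v -> Prop) : Prop :=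
  fle d1 d2 /\ forall v, fle v d1 -> forall y, G1 v y -> G2 v y.

Definition down (u : X) (z : sec F u) : forall v : X, sec F v -> Prop :=
  fun v y => exists h : fle v u, ple F y (res F h z).

Definition is_left_adjoint_of_down
  (alpha : forall (u : X) (G : forall v : X, sec F v -> Prop), is_downsheaf u G -> sec F u)
  : Prop :=
  (forall u w (h : fle w u) G (pu : is_downsheaf u G) (pw : is_downsheaf w G),
      alpha w G pw = res F h (alpha u G pu)) /\
  (forall d1 G1 (p1 : is_downsheaf d1 G1) d2 G2 (p2 : is_downsheaf d2 G2),
      ptleD d1 G1 d2 G2 -> ptleF (alpha d1 G1 p1) (alpha d2 G2 p2)) /\
  (forall d1 G (p : is_downsheaf d1 G) d2 (x : sec F d2),
      ptleF (alpha d1 G p) x <-> ptleD d1 G d2 (down x)).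

Definition complete_posheaf : Prop :=
  exists alpha, is_left_adjoint_of_down alpha.

End PosheafNotions.

Definition is_lub (T : Type) (le : T -> T -> Prop) (S : T -> Prop) (s : T) : Prop :=
  (forall x, S x -> le x s) /\ (forall b, (forall x, S x -> le x b) -> le s b).

Definition is_glb (T : Type) (le : T -> T -> Prop) (S : T -> Prop) (s : T) : Prop :=
  (forall x, S x -> le s x) /\ (forall b, (forall x, S x -> le b x) -> le b s).

Definition complete_lattice (T : Type) (le : T -> T -> Prop) : Prop :=
  (forall S : T -> Prop, exists s, is_lub le S s) /\
  (forall S : T -> Prop, exists s, is_glb le S s).

Definition image (A B : Type) (f : A -> B) (S : A -> Prop) : B -> Prop :=
  fun y => exists x, S x /\ y = f x.

Definition preserves_sups (A B : Type) (leA : A -> A -> Prop) (leB : B -> B -> Prop)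
  (f : A -> B) : Prop :=
  forall (S : A -> Prop) s, is_lub leA S s -> is_lub leB (image f S) (f s).

Definition preserves_infs (A B : Type) (leA : A -> A -> Prop) (leB : B -> B -> Prop)
  (f : A -> B) : Prop :=
  forall (S : A -> Prop) s, is_glb leA S s -> is_glb leB (image f S) (f s).

Definition surjective (A B : Type) (f : A -> B) : Prop := forall y, exists x, f x = y.

(* If alpha is left adjoint to down, then alpha applied to the downsheaf
   generated by a family S of sections is the join of S, and naturality of
   alpha makes restriction preserve these joins; moreover y |-> alpha(down y)
   is a left adjoint section of restriction, so restriction is surjective and
   preserves meets.
   Conversely, take alpha(G) to be the meet of all sections bounding G.  It is
   an order-theoretic left adjoint of down at once; the difficulty is
   naturality, i.e. that restriction to a smaller open commutes with taking
   this meet.  The key step extends a bounding section over a smaller open,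
   together with a section of G over another open, to a single section over
   the larger open: shrink the bound so it agrees with the G-section on the
   overlap (surjectivity and preservation of binary meets), glue (sheaf
   condition), and extend (surjectivity); then preservation of joins
   finishes. *)
From Stdlib Require Import IndefiniteDescription.
Set Implicit Arguments.
Unset Strict Implicit.

Section OrderTheory.
Variables (T : Type) (le : T -> T -> Prop).

Lemma is_lub_ext (S S' : T -> Prop) s :
  (forall x, S x <-> S' x) -> is_lub le S s -> is_lub le S' s.
Proof.
  intros HS [Hub Hleast]; split.
  - intros x Hx; apply Hub, HS, Hx.
  - intros b Hb; apply Hleast; intros x Hx; apply Hb, HS, Hx.
Qed.

Lemma glbs_of_lubs :
  (forall S : T -> Prop, exists s, is_lub le S s) ->
  forall S : T -> Prop, exists s, is_glb le S s.
Proof.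
  intros Hlub S.
  destruct (Hlub (fun x => forall s, S s -> le x s)) as [g [Hub Hleast]].
  exists g; split.
  - intros x Hx; apply Hleast; auto.
  - intros b Hb; apply Hub; auto.
Qed.

Hypothesis le_antisym : forall x y, le x y -> le y x -> x = y.

Lemma is_lub_unique (S : T -> Prop) s s' : is_lub le S s -> is_lub le S s' -> s = s'.
Proof. intros [Hub Hl] [Hub' Hl']; apply le_antisym; [apply Hl, Hub' | apply Hl', Hub]. Qed.

Lemma is_glb_unique (S : T -> Prop) s s' : is_glb le S s -> is_glb le S s' -> s = s'.
Proof. intros [Hlb Hg] [Hlb' Hg']; apply le_antisym; [apply Hg', Hlb | apply Hg, Hlb']. Qed.

End OrderTheory.

Lemma right_adjoint_preserves_infs (A B : Type) (leA : A -> A -> Prop)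
    (leB : B -> B -> Prop) (l : B -> A) (r : A -> B) :
  (forall x y, leA x y -> leB (r x) (r y)) ->
  (forall y x, leA (l y) x <-> leB y (r x)) ->
  preserves_infs leA leB r.
Proof.
  intros r_mono galois S s [Hlb Hg]; split.
  - intros y [x [Hx ->]]; apply r_mono, Hlb, Hx.
  - intros b Hb; apply galois, Hg; intros x Hx.
    apply galois, Hb; exists x; auto.
Qed.

Section Frames.
Variable X : Locale.

Lemma fsup_ext (P Q : X -> Prop) : (forall x, P x <-> Q x) -> fsup P = fsup Q.
Proof.
  intro HPQ; apply fle_antisym; apply fsup_least; intros a Ha; apply fsup_ub, HPQ, Ha.
Qed.

Lemma covers_fmeet (v v' : X) I (vi : I -> X) :
  covers v' vi -> covers (fmeet v v') (fun i => fmeet v (vi i)).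
Proof.
  unfold covers; intros ->; rewrite fdistr; apply fsup_ext; intro x; split.
  - intros [s [[i ->] ->]]; exists i; auto.
  - intros [i ->]; exists (vi i); eauto.
Qed.

Lemma covers_const (w c : X) : fle w c -> fle c w -> covers w (fun _ : unit => c).
Proof.
  unfold covers; intros Hwc Hcw; apply fle_antisym.
  - eapply fle_trans; [exact Hwc|]; apply fsup_ub; exists tt; reflexivity.
  - apply fsup_least; intros a [_ ->]; auto.
Qed.

Lemma covers_le (v : X) I (vi : I -> X) d :
  covers v vi -> (forall i, fle (vi i) d) -> fle v d.
Proof. intros -> Hi; apply fsup_least; intros a [i ->]; auto. Qed.

End Frames.

Section Posheaves.
Variables (X : Locale) (F : Posheaf X).

Local Notation downsheaf u G := (@is_downsheaf X F u G).

Lemma resF_comp {u v w : X} (h1 : fle v u) (h2 : fle w v) (h3 : fle w u) (x : sec F u) :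
  res F h2 (res F h1 x) = res F h3 x.
Proof. apply res_comp. Qed.

Lemma resF_pi {u v : X} (h1 h2 : fle v u) (x : sec F u) : res F h1 x = res F h2 x.
Proof. apply res_pi. Qed.

Lemma resF_id {u : X} (h : fle u u) (x : sec F u) : res F h x = x.
Proof. apply res_id. Qed.

Lemma glue_pair (w w' : X) (x : sec F w) (y : sec F w') :
  res F (fmeet_l w w') x = res F (fmeet_r w w') y ->
  exists t : sec F (fsup (fun c => c = w \/ c = w')),
    res F (fsup_ub (or_introl eq_refl)) t = x /\
    res F (fsup_ub (or_intror eq_refl)) t = y.
Proof.
  intros Hxy.
  set (ui := fun i : bool => if i then w else w').
  set (p := fsup (fun c => c = w \/ c = w')).
  assert (cov : covers p ui).
  { apply fsup_ext; intro c; split.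
    - intros [-> | ->]; [exists true | exists false]; reflexivity.
    - intros [[|] ->]; auto. }
  assert (hle : forall i, fle (ui i) p) by (intros [|]; apply fsup_ub; auto).
  set (s := fun i : bool => match i return sec F (ui i) with true => x | false => y end).
  assert (agree : forall c (k : fle c w) (k' : fle c w'), res F k x = res F k' y).
  { intros c k k'.
    rewrite <- (resF_comp (fmeet_l w w') (fmeet_glb k k') k), Hxy.
    apply resF_comp. }
  assert (compat : compatible (F := F) (ui := ui) s).
  { intros [|] [|]; simpl;
      [apply resF_pi | apply agree | symmetry; apply agree | apply resF_pi]. }
  destruct (psh_sheaf hle cov compat) as [t [Ht _]].
  exists t; split; [rewrite (resF_pi _ (hle true)) | rewrite (resF_pi _ (hle false))];
    apply (Ht true) || apply (Ht false).
Qed.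

Lemma downsheaf_restrict u v G :
  downsheaf u G -> fle v u -> downsheaf v G.
Proof.
  intros [Hdown [Hres Hglue]] hv; split; [|split].
  - intros w hw; apply Hdown; eapply fle_trans; eauto.
  - intros w w' hw; apply (Hres w w' (fle_trans hw hv)).
  - intros w I vi hle hw; apply (Hglue w I vi hle (fle_trans hw hv)).
Qed.

Lemma down_is_downsheaf u d (b : sec F d) : downsheaf u (down b).
Proof.
  split; [|split].
  - intros v _ x y [h Hy] Hxy; exists h; eapply ple_trans; eauto.
  - intros v w _ h x [h' Hx]; exists (fle_trans h h').
    rewrite <- (resF_comp h' h); apply res_mono, Hx.
  - intros v I vi hle _ cov s compat Hs.
    destruct (psh_sheaf hle cov compat) as [t [Ht _]].
    assert (hvd : fle v d).
    { apply (covers_le cov); intro i; destruct (Hs i) as [h _]; exact h. }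
    exists t; split; [exists hvd | exact Ht].
    apply (pos3 (hle := hle) cov); intro i.
    destruct (Hs i) as [hi Hi]; rewrite Ht, (resF_comp hvd (hle i) hi); exact Hi.
Qed.

Definition generated_downsheaf u (S : sec F u -> Prop) : forall v, sec F v -> Prop :=
  fun w y => forall K, downsheaf u K -> (forall s, S s -> K u s) -> K w y.

Lemma generated_downsheaf_is_downsheaf u (S : sec F u -> Prop) :
  downsheaf u (generated_downsheaf S).
Proof.
  split; [|split].
  - intros v hv x y Hy Hxy K pK HS; exact (proj1 pK v hv x y (Hy K pK HS) Hxy).
  - intros v w hv h x Hx K pK HS; exact (proj1 (proj2 pK) v w hv h x (Hx K pK HS)).
  - intros v I vi hle hv cov s compat Hs.
    destruct (psh_sheaf hle cov compat) as [t [Ht Huniq]].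
    exists t; split; [|exact Ht]; intros K pK HS.
    destruct (proj2 (proj2 pK) v I vi hle hv cov s compat (fun i => Hs i K pK HS))
      as [t' [Kt' Ht']].
    rewrite <- (Huniq t' Ht'); exact Kt'.
Qed.

Definition below_on_overlap v (b : sec F v) : forall w, sec F w -> Prop :=
  fun w y => ple F (res F (fmeet_r v w) y) (res F (fmeet_l v w) b).

Lemma below_on_overlap_is_downsheaf u v (b : sec F v) :
  downsheaf u (below_on_overlap b).
Proof.
  unfold below_on_overlap; split; [|split].
  - intros w _ x y Hy Hxy; eapply ple_trans; [apply res_mono, Hxy | exact Hy].
  - intros v' w _ h x Hx.
    pose (m := fmeet_glb (fmeet_l v w) (fle_trans (fmeet_r v w) h)).
    rewrite (resF_comp h (fmeet_r v w) (fle_trans (fmeet_r v w) h)),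
      <- (resF_comp (fmeet_r v v') m), <- (resF_comp (fmeet_l v v') m (fmeet_l v w)).
    apply res_mono, Hx.
  - intros v' I vi hle _ cov s compat Hs.
    destruct (psh_sheaf hle cov compat) as [t [Ht _]].
    exists t; split; [|exact Ht].
    pose (hle' := fun i =>
      fmeet_glb (fmeet_l v (vi i)) (fle_trans (fmeet_r v (vi i)) (hle i))).
    apply (pos3 (hle := hle') (covers_fmeet v cov)); intro i.
    rewrite (resF_comp (fmeet_r v v') (hle' i) (fle_trans (fmeet_r v (vi i)) (hle i))),
      <- (resF_comp (hle i) (fmeet_r v (vi i))), Ht,
      (resF_comp (fmeet_l v v') (hle' i) (fmeet_l v (vi i))).
    apply Hs.
Qed.

Section LeftAdjointOfDown.
Variable alpha : forall u (G : forall v : X, sec F v -> Prop), downsheaf u G -> sec F u.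
Hypothesis alpha_adj : is_left_adjoint_of_down alpha.

Lemma alpha_ub u G (pG : downsheaf u G) v (hv : fle v u) y :
  G v y -> ple F y (res F hv (alpha pG)).
Proof.
  intro Gy.
  destruct (proj1 (proj2 (proj2 alpha_adj) u G pG u (alpha pG))) as [_ Hsub].
  - exists (fle_refl u); rewrite resF_id; apply ple_refl.
  - destruct (Hsub v hv y Gy) as [h' Hy]; rewrite (resF_pi hv h'); exact Hy.
Qed.

Lemma alpha_least u G (pG : downsheaf u G) (x : sec F u) :
  (forall v (hv : fle v u) y, G v y -> ple F y (res F hv x)) -> ple F (alpha pG) x.
Proof.
  intro Hx.
  destruct (proj2 (proj2 (proj2 alpha_adj) u G pG u x)) as [h Hh].
  - split; [apply fle_refl|]; intros v hv y Gy; exists hv; auto.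
  - rewrite resF_id in Hh; exact Hh.
Qed.

Lemma alpha_down d (b : sec F d) (p : downsheaf d (down b)) : alpha p = b.
Proof.
  apply ple_antisym.
  - apply alpha_least; intros v hv y [h Hy]; rewrite (resF_pi hv h); auto.
  - rewrite <- (resF_id (fle_refl d) (alpha p)); apply alpha_ub.
    exists (fle_refl d); rewrite resF_id; apply ple_refl.
Qed.

Lemma alpha_generated_is_lub_res u (S : sec F u -> Prop) v (hv : fle v u)
    (p : downsheaf v (generated_downsheaf S)) :
  is_lub (ple F) (image (res F hv) S) (alpha p).
Proof.
  split.
  - intros x [s [Hs ->]].
    rewrite <- (resF_id (fle_refl v) (alpha p)); apply alpha_ub.
    intros K pK HS; apply (proj1 (proj2 pK) u v (fle_refl u) hv s (HS s Hs)).
  - intros b Hb; apply alpha_least; intros w hw y Dy.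
    assert (HSb : forall s, S s -> below_on_overlap b s).
    { intros s Hs; unfold below_on_overlap.
      rewrite <- (resF_comp hv (fmeet_l v u) (fmeet_r v u)).
      apply res_mono, Hb; exists s; auto. }
    pose proof (Dy _ (below_on_overlap_is_downsheaf u b) HSb) as Hy.
    apply (pos3 (hle := fun _ => fmeet_r v w)
             (covers_const (fmeet_glb hw (fle_refl w)) (fmeet_r v w))); intros _.
    rewrite (resF_comp hw (fmeet_r v w) (fmeet_l v w)); exact Hy.
Qed.

Lemma alpha_generated_is_lub u (S : sec F u -> Prop) :
  is_lub (ple F) S (alpha (generated_downsheaf_is_downsheaf S)).
Proof.
  eapply is_lub_ext; [|apply (alpha_generated_is_lub_res (fle_refl u))]; intro x; split.
  - intros [s [Hs ->]]; rewrite resF_id; auto.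
  - intros Hx; exists x; rewrite resF_id; auto.
Qed.

Definition extend u v (y : sec F v) : sec F u :=
  alpha (down_is_downsheaf u y).

Lemma res_extend u v (h : fle v u) y : res F h (extend u y) = y.
Proof.
  unfold extend; rewrite <- (proj1 alpha_adj u v h _ _ (down_is_downsheaf v y)).
  apply alpha_down.
Qed.

Lemma extend_galois u v (h : fle v u) y x :
  ple F (extend u y) x <-> ple F y (res F h x).
Proof.
  split; intro Hyx.
  - rewrite <- (res_extend h y) at 1; apply res_mono, Hyx.
  - apply alpha_least; intros w hw z [h' Hz].
    eapply ple_trans; [exact Hz|].
    rewrite <- (resF_comp h h' hw); apply res_mono, Hyx.
Qed.

Lemma complete_posheaf_lattices u : complete_lattice (ple F (u := u)).
Proof.
  assert (Hlub : forall S : sec F u -> Prop, exists s, is_lub (ple F) S s)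
    by (intro S; eexists; apply alpha_generated_is_lub).
  split; [exact Hlub | exact (glbs_of_lubs Hlub)].
Qed.

Lemma complete_posheaf_restrictions u v (h : fle v u) :
  surjective (res F h) /\
  preserves_sups (ple F (u := u)) (ple F (u := v)) (res F h) /\
  preserves_infs (ple F (u := u)) (ple F (u := v)) (res F h).
Proof.
  split; [|split].
  - intro y; exists (extend u y); apply res_extend.
  - intros S s Hs.
    rewrite (is_lub_unique (@ple_antisym _ F u) Hs (alpha_generated_is_lub S)),
      <- (proj1 alpha_adj u v h _ _
            (downsheaf_restrict (generated_downsheaf_is_downsheaf S) h)).
    apply alpha_generated_is_lub_res.
  - apply (right_adjoint_preserves_infs (l := @extend u v)); [apply res_mono|].
    intros; apply extend_galois.
Qed.

End LeftAdjointOfDown.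

Section CompleteLatticeSheaf.
Hypothesis lattices : forall u : X, complete_lattice (ple F (u := u)).
Hypothesis restrictions : forall u v (h : fle v u),
  surjective (res F h) /\
  preserves_sups (ple F (u := u)) (ple F (u := v)) (res F h) /\
  preserves_infs (ple F (u := u)) (ple F (u := v)) (res F h).

Definition lub u (S : sec F u -> Prop) : sec F u :=
  proj1_sig (constructive_indefinite_description _ (proj1 (lattices u) S)).

Lemma lub_spec u (S : sec F u -> Prop) : is_lub (ple F) S (lub S).
Proof. unfold lub; destruct constructive_indefinite_description; auto. Qed.

Definition glb u (S : sec F u -> Prop) : sec F u :=
  proj1_sig (constructive_indefinite_description _ (proj2 (lattices u) S)).

Lemma glb_spec u (S : sec F u -> Prop) : is_glb (ple F) S (glb S).
Proof. unfold glb; destruct constructive_indefinite_description; auto. Qed.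

Lemma res_glb u v (h : fle v u) (S : sec F u -> Prop) :
  is_glb (ple F) (image (res F h) S) (res F h (glb S)).
Proof. apply (proj2 (proj2 (restrictions h))), glb_spec. Qed.

Lemma res_lub u v (h : fle v u) (S : sec F u -> Prop) :
  is_lub (ple F) (image (res F h) S) (res F h (lub S)).
Proof. apply (proj1 (proj2 (restrictions h))), lub_spec. Qed.

Definition bounds u (G : forall v : X, sec F v -> Prop) (z : sec F u) : Prop :=
  forall w (h : fle w u) y, G w y -> ple F y (res F h z).

Definition alpha_glb u (G : forall v : X, sec F v -> Prop) (_ : downsheaf u G) : sec F u :=
  glb (bounds G).

Lemma glb_bounds u G : bounds G (glb (u := u) (bounds G)).
Proof.
  intros w h y Gy; apply (proj2 (res_glb h (bounds G))).
  intros x [z [Hz ->]]; apply Hz, Gy.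
Qed.

Lemma glb_bounds_least u G (z : sec F u) : bounds G z -> ple F (glb (bounds G)) z.
Proof. intro Hz; apply (proj1 (glb_spec (bounds G))), Hz. Qed.

Lemma alpha_glb_galois d1 G (p : downsheaf d1 G) d2 (x : sec F d2) :
  ptleF (alpha_glb p) x <-> ptleD d1 G d2 (down x).
Proof.
  unfold alpha_glb; split.
  - intros [h Hh]; split; [exact h|]; intros v hv y Gy.
    exists (fle_trans hv h); eapply ple_trans; [apply (@glb_bounds d1 G v hv y Gy)|].
    rewrite <- (resF_comp h hv); apply res_mono, Hh.
  - intros [h Hh]; exists h; apply glb_bounds_least; intros w hw y Gy.
    destruct (Hh w hw y Gy) as [h' Hy]; rewrite (resF_comp h hw h'); exact Hy.
Qed.

Lemma shrink_to_agree w c (h : fle c w) (a : sec F w) (r : sec F c) :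
  ple F r (res F h a) -> exists a', ple F a' a /\ res F h a' = r.
Proof.
  intros Hra; destruct (proj1 (restrictions h) r) as [s Hs].
  set (P := fun x : sec F w => x = a \/ x = s).
  exists (glb P); split; [apply (proj1 (glb_spec P)); left; reflexivity|].
  apply (is_glb_unique (@ple_antisym _ F c) (res_glb h P)); split.
  - intros x [x0 [[-> | ->] ->]]; [exact Hra | rewrite Hs; apply ple_refl].
  - intros b Hb; rewrite <- Hs; apply Hb; exists s; split; [right|]; reflexivity.
Qed.

Lemma glue_pair_extend u w w' (h : fle w u) (h' : fle w' u) (x : sec F w) (y : sec F w') :
  res F (fmeet_l w w') x = res F (fmeet_r w w') y ->
  exists n : sec F u, res F h n = x /\ res F h' n = y.
Proof.
  intros Hxy; destruct (glue_pair Hxy) as [t [Htx Hty]].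
  assert (hp : fle (fsup (fun c => c = w \/ c = w')) u)
    by (apply fsup_least; intros c [-> | ->]; assumption).
  destruct (proj1 (restrictions hp) t) as [n <-].
  exists n; split; [rewrite <- Htx | rewrite <- Hty]; symmetry; apply resF_comp.
Qed.

Lemma bound_extension u w w' (h : fle w u) (h' : fle w' u) G (pG : downsheaf u G)
    (a : sec F w) (y : sec F w') :
  bounds G a -> G w' y -> exists n : sec F u, ple F (res F h n) a /\ res F h' n = y.
Proof.
  intros Ha Gy.
  assert (Gc : G (fmeet w w') (res F (fmeet_r w w') y))
    by apply (proj1 (proj2 pG) w' _ h' (fmeet_r w w') y Gy).
  destruct (shrink_to_agree (Ha _ (fmeet_l w w') _ Gc)) as [a' [Ha'a Ha'y]].
  destruct (glue_pair_extend h h' Ha'y) as [n [Hna' Hny]].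
  exists n; rewrite Hna'; auto.
Qed.

Lemma alpha_glb_natural u w (h : fle w u) G (pu : downsheaf u G)
    (pw : downsheaf w G) :
  alpha_glb pw = res F h (alpha_glb pu).
Proof.
  unfold alpha_glb; apply ple_antisym.
  - apply glb_bounds_least; intros w' h' y Gy.
    rewrite (resF_comp h h' (fle_trans h' h)); apply glb_bounds, Gy.
  - set (Z := fun z : sec F u => ple F (res F h z) (glb (bounds (u := w) G))).
    eapply ple_trans; [apply res_mono | apply (proj2 (res_lub h Z))].
    + apply glb_bounds_least; intros w' h' y Gy.
      destruct (bound_extension h h' pu (@glb_bounds w G) Gy) as [n [HnZ <-]].
      apply res_mono, (proj1 (lub_spec Z)), HnZ.
    + intros x [z [Hz ->]]; exact Hz.
Qed.

Lemma alpha_glb_left_adjoint : is_left_adjoint_of_down alpha_glb.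
Proof.
  split; [|split].
  - intros; apply alpha_glb_natural.
  - intros d1 G1 p1 d2 G2 p2 [h H12]; apply (proj2 (alpha_glb_galois p1 _)).
    split; [exact h|]; intros v hv y Gy.
    exists (fle_trans hv h); apply (@glb_bounds d2 G2), H12; assumption.
  - intros; apply alpha_glb_galois.
Qed.

End CompleteLatticeSheaf.
End Posheaves.

Theorem corollary3p2 (X : Locale) (F : Posheaf X) :
  complete_posheaf F <->
  ((forall u : X, complete_lattice (@ple X F u)) /\
   (forall (u v : X) (h : fle v u),
      surjective (res F h) /\
      preserves_sups (@ple X F u) (@ple X F v) (res F h) /\
      preserves_infs (@ple X F u) (@ple X F v) (res F h))).
Proof.
  split.
  - intros [alpha Halpha]; split.
    + exact (complete_posheaf_lattices Halpha).
    + exact (complete_posheaf_restrictions Halpha).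
  - intros [Hlattices Hrestrictions].
    exists (alpha_glb Hlattices); exact (@alpha_glb_left_adjoint X F Hlattices Hrestrictions).
Qed.
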